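(* Let $K$ be a field of characteristic zero, $S=K[X_0,X_1,Y_0,Y_1]$ bigraded by $\deg X_i=(1,0)$, $\deg Y_i=(0,1)$. Let $\mathbb{Y}=\sum_{(i,j)\in D_{\mathbb{X}}} m_{ij}P_{ij}$ be a fat point scheme in $\mathbb{P}^1\times\mathbb{P}^1$ and let $\mathbb{V}=\sum_{(i,j)\in D_{\mathbb{X}}}(m_{ij}+1)P_{ij}$ be its thickening. Then the sequence of bigraded $R_{\mathbb{Y}}$-modules $$0\longrightarrow I_{\mathbb{Y}}/I_{\mathbb{V}}\longrightarrow R_{\mathbb{Y}}^2(-1,0)\oplus R_{\mathbb{Y}}^2(0,-1)\longrightarrow \Omega^1_{R_{\mathbb{Y}}/K}\longrightarrow 0$$ is exact, where the first map sends $F+I_{\mathbb{V}}$ ($F\in I_{\mathbb{Y}}$) to the class of $dF=\sum_{i}\frac{\partial F}{\partial X_i}dX_i+\sum_i\frac{\partial F}{\partial Y_i}dY_i$ in $\Omega^1_{S/K}/I_{\mathbb{Y}}\Omega^1_{S/K}\cong R_{\mathbb{Y}}^2(-1,0)\oplus R_{\mathbb{Y}}^2(0,-1)$ (basis $dX_0,dX_1,dY_0,dY_1$), and the second map sends $dX_0,dX_1,dY_0,dY_1$ to $dx_0,dx_1,dy_0,dy_1$.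
   Context: Points of $\mathbb{P}^1\times\mathbb{P}^1$ are $K$-rational. For a finite set $\mathbb{X}$ of distinct points, $\pi_1(\mathbb{X})=\{Q_1,\dots,Q_r\}$, $\pi_2(\mathbb{X})=\{R_1,\dots,R_t\}$, $P_{ij}=Q_i\times R_j$, $D_{\mathbb{X}}=\{(i,j)\mid P_{ij}\in\mathbb{X}\}$, $\wp_{ij}$ the (bihomogeneous prime) vanishing ideal of $P_{ij}$. For positive integers $m_{ij}$ the fat point scheme $\mathbb{Y}=\sum m_{ij}P_{ij}$ has ideal $I_{\mathbb{Y}}=\bigcap\wp_{ij}^{m_{ij}}$ and bihomogeneous coordinate ring $R_{\mathbb{Y}}=S/I_{\mathbb{Y}}$; $x_i,y_i$ denote the images of $X_i,Y_i$. $\Omega^1_{R_{\mathbb{Y}}/K}=J/J^2$ where $J$ is the kernel of multiplication $R_{\mathbb{Y}}\otimes_K R_{\mathbb{Y}}\to R_{\mathbb{Y}}$, bigraded with $\deg dx_i=(1,0)$, $\deg dy_i=(0,1)$. For a bigraded module $M$, $M(a,b)_{i,j}=M_{a+i,b+j}$. *)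

From HB Require Import structures.
From mathcomp Require Import all_boot all_order all_algebra.
From mathcomp Require Import mpoly.
Set Implicit Arguments. Unset Strict Implicit. Unset Printing Implicit Defensive.
Import Order.TTheory GRing.Theory.
Local Open Scope ring_scope.

Definition gen_ideal (R : comRingType) (P : R -> Prop) (x : R) : Prop :=
  exists s : seq (R * R), (forall p, p \in s -> P p.2) /\
                          x = \sum_(p <- s) p.1 * p.2.

Definition idealM (R : comRingType) (P Q : R -> Prop) : R -> Prop :=
  gen_ideal (fun x => exists a b, P a /\ Q b /\ x = a * b).
Definition idealX (R : comRingType) (P : R -> Prop) (k : nat) : R -> Prop :=
  iter k (idealM P) (fun _ => True).

Definition iX0 : 'I_4 := inord 0.
Definition iX1 : 'I_4 := inord 1.
Definition iY0 : 'I_4 := inord 2.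
Definition iY1 : 'I_4 := inord 3.

Definition bihomog (K : fieldType) (F : {mpoly K[4]}) : Prop :=
  exists a b : nat, forall mo, mo \in msupp F ->
     (mo iX0 + mo iX1)%N = a /\ (mo iY0 + mo iY1)%N = b.

Definition ptcoord (K : fieldType) (q r : K * K) (i : 'I_4) : K :=
  if i == iX0 then q.1 else if i == iX1 then q.2
  else if i == iY0 then r.1 else r.2.

Definition van_ideal (K : fieldType) (q r : K * K) : {mpoly K[4]} -> Prop :=
  gen_ideal (fun F => bihomog F /\ F.@[ptcoord q r] = 0).

Definition fat_ideal (K : fieldType) (r t : nat) (Q : 'I_r -> K * K)
  (R : 'I_t -> K * K) (D : {set 'I_r * 'I_t}) (mu : 'I_r -> 'I_t -> nat)
  (F : {mpoly K[4]}) : Prop :=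
  forall ij, ij \in D -> idealX (van_ideal (Q ij.1) (R ij.2)) (mu ij.1 ij.2) F.

(* S (x)_K S is modelled as K[X, X'] = {mpoly K[8]}: variable i of the first
   tensor factor is lshift 4 i, of the second factor rshift 4 i. *)
Definition embL (K : fieldType) (F : {mpoly K[4]}) : {mpoly K[4 + 4]} :=
  mmap (@mpolyC (4 + 4) K) (fun i => 'X_(lshift 4 i)) F.
Definition embR (K : fieldType) (F : {mpoly K[4]}) : {mpoly K[4 + 4]} :=
  mmap (@mpolyC (4 + 4) K) (fun i => 'X_(rshift 4 i)) F.
(* multiplication map S (x) S -> S, X_i (x) 1 |-> X_i, 1 (x) X_i |-> X_i *)
Definition diagmap (K : fieldType) (w : {mpoly K[4 + 4]}) : {mpoly K[4]} :=
  mmap (@mpolyC 4 K)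
    (fun k : 'I_(4 + 4) => 'X_(match split k with inl i => i | inr i => i end)) w.

(* Let I = I_Y.  R_Y (x) R_Y = K[X,X'] / N with N = (I(X)) + (I(X')).
   The preimage in K[X,X'] of J = ker(R_Y (x) R_Y -> R_Y): *)
Definition Jpre (K : fieldType) (I : {mpoly K[4]} -> Prop)
  (w : {mpoly K[4 + 4]}) : Prop := I (diagmap w).

(* Omega^1_{R_Y/K} = J/J^2 = Jpre / (Jpre^2 + N); an element w of Jpre
   represents zero in J/J^2 iff it lies in the ideal Jpre^2 + N. *)
Definition omega_zero (K : fieldType) (I : {mpoly K[4]} -> Prop)
  (w : {mpoly K[4 + 4]}) : Prop :=
  gen_ideal (fun x => (exists a b, Jpre I a /\ Jpre I b /\ x = a * b)
                   \/ (exists f, I f /\ x = embL f)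
                   \/ (exists f, I f /\ x = embR f)) w.

(* The second map R_Y^4 -> Omega^1: (G_i) |-> sum_i g_i dx_i, where
   dx_i = 1 (x) x_i - x_i (x) 1 and R_Y acts through the first factor. *)
Definition dmap (K : fieldType) (G : 'I_4 -> {mpoly K[4]}) : {mpoly K[4 + 4]} :=
  \sum_(i < 4) embL (G i) * ('X_(rshift 4 i) - 'X_(lshift 4 i)).

Definition dF (K : fieldType) (F : {mpoly K[4]}) : 'I_4 -> {mpoly K[4]} :=
  fun i => F^`M(i).

From HB Require Import structures.
From mathcomp Require Import all_boot all_order all_algebra.
From mathcomp Require Import mpoly.
From mathcomp Require Import ring.
Import GRing.Theory.
Local Open Scope ring_scope.
Set Implicit Arguments. Unset Strict Implicit. Unset Printing Implicit Defensive.

(* Injectivity is local at each point Q x R of the support.  Its ideal p is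
   generated by LQ = q2 X0 - q1 X1 and LR = r2 Y0 - r1 Y1.  Choosing
   u0 q2 - u1 q1 = 1 and v0 r2 - v1 r1 = 1, the derivation
     E = LQ (u0 d/dX0 + u1 d/dX1) + LR (v0 d/dY0 + v1 d/dY1)
   fixes LQ and LR, hence acts on p^k / p^(k+1) as multiplication by k.  If F is
   in p^k with all partials in p^k, then E F lies in p^(k+1), hence so does k F,
   and so does F since the characteristic is 0.
   The other statements are formal.  In K[X, X'] the first-order Taylor expansion
     w = w(X, X) + sum_i (dw/dX'_i)(X, X) (X'_i - X_i)
   holds modulo products of two polynomials vanishing on the diagonal, i.e.
   modulo the preimage of J^2; this identifies J/J^2 with the module generated
   by the dx_i subject to the relations dF, F in I_Y. *)

Section Ideals.
Variable R : comNzRingType.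
Implicit Types (P : R -> Prop) (I : R -> Prop) (x y c : R).

Definition is_ideal I :=
  [/\ I 0, forall x y, I x -> I y -> I (x + y) & forall c x, I x -> I (c * x)].

Section IdealTheory.
Variables (I : R -> Prop) (hI : is_ideal I).

Lemma ideal0 : I 0. Proof. by case: hI. Qed.

Lemma idealD x y : I x -> I y -> I (x + y). Proof. by case: hI => _ + _; apply. Qed.

Lemma idealMl c x : I x -> I (c * x). Proof. by case: hI => _ _; apply. Qed.

Lemma idealMr c x : I x -> I (x * c). Proof. by rewrite mulrC; apply: idealMl. Qed.

Lemma idealN x : I x -> I (- x). Proof. by move/(idealMl (-1)); rewrite mulN1r. Qed.

Lemma idealB x y : I x -> I y -> I (x - y). Proof. by move=> hx /idealN; apply: idealD. Qed.

Lemma ideal_sum (T : Type) (s : seq T) (F : T -> R) :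
  (forall t, I (F t)) -> I (\sum_(t <- s) F t).
Proof. by move=> hF; elim/big_rec: _ => [|t y _]; [apply: ideal0 | apply: idealD]. Qed.

End IdealTheory.

Lemma gen_ideal_ind P (Phi : R -> Prop) :
  Phi 0 -> (forall x y, Phi x -> Phi y -> Phi (x + y)) ->
  (forall c x, P x -> Phi (c * x)) -> forall x, gen_ideal P x -> Phi x.
Proof.
move=> Phi0 PhiD PhiM _ [s [sP ->]]; rewrite big_seq.
elim/big_rec: _ => [//|p y ps Phiy].
by apply: PhiD => //; apply: PhiM; apply: sP.
Qed.

Lemma gen_ideal_is_ideal P : is_ideal (gen_ideal P).
Proof.
split.
- by exists [::]; rewrite big_nil.
- move=> _ _ [s [sP ->]] [t [tP ->]]; exists (s ++ t); rewrite big_cat.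
  by split=> // p; rewrite mem_cat => /orP[/sP | /tP].
- move=> c _ [s [sP ->]]; exists [seq (c * p.1, p.2) | p <- s]; split.
    by move=> _ /mapP[p /sP Pp ->].
  by rewrite big_map mulr_sumr; apply: eq_bigr => p _; rewrite mulrA.
Qed.

Lemma mem_gen_ideal P x : P x -> gen_ideal P x.
Proof. by exists [:: (1, x)]; split=> [p /[1!inE]/eqP -> | ]; rewrite ?big_seq1 ?mul1r. Qed.

Lemma gen_ideal_min P I : is_ideal I -> (forall x, P x -> I x) ->
  forall x, gen_ideal P x -> I x.
Proof.
move=> hI PI; apply: gen_ideal_ind (idealD hI) _ => [|c x /PI].
  exact: ideal0.
exact: idealMl.
Qed.

Lemma gen_ideal_mono P P' : (forall x, P x -> P' x) ->
  forall x, gen_ideal P x -> gen_ideal P' x.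
Proof.
by move=> PP'; apply: gen_ideal_min (gen_ideal_is_ideal _) _ => x /PP'/mem_gen_ideal.
Qed.

Lemma idealX_is_ideal P k : is_ideal (idealX P k).
Proof. by case: k => [|k]; [split | apply: gen_ideal_is_ideal]. Qed.

Lemma idealXS_mul P k a b : P a -> idealX P k b -> idealX P k.+1 (a * b).
Proof. by move=> Pa Pb; apply: mem_gen_ideal; exists a, b. Qed.

Lemma idealXS_sub P k x : idealX P k.+1 x -> idealX P k x.
Proof.
elim: k x => [//|k IHk] x; apply: gen_ideal_mono => _ [a [b [Pa [Pb ->]]]].
by exists a, b; split=> //; split=> //; apply: IHk.
Qed.

End Ideals.

Lemma mpoly_ringind n (R : comNzRingType) (P : {mpoly R[n]} -> Prop) :
  (forall c, P c%:MP) -> (forall i, P 'X_i) ->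
  (forall p q, P p -> P q -> P (p + q)) -> (forall p q, P p -> P q -> P (p * q)) ->
  forall p, P p.
Proof.
move=> PC PX PD PM; elim/mpolyind => [|c m p _ _ Pp]; first by rewrite -mpolyC0.
apply: PD Pp; rewrite -mul_mpolyC; apply: (PM) => //; rewrite mpolyXE_id.
elim/big_rec: _ => [|i y _ Py]; first by rewrite -mpolyC1.
by apply: (PM) Py; elim: (m i) => [|k IHk]; rewrite ?expr0 -?mpolyC1 // exprS; apply: PM.
Qed.

Lemma mderivXU n (R : comNzRingType) (i j : 'I_n) :
  ('X_j : {mpoly R[n]})^`M(i) = (j == i)%:R.
Proof.
rewrite mderivX mnm1E; have [->|_] := eqVneq j i; last by rewrite scale0r.
have -> : (U_(i) - U_(i) = 0)%MM by apply/mnmP => k; rewrite mnmBE mnm0E subnn.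
by rewrite mpolyX0 scale1r.
Qed.

Lemma mderiv_idealX n (R : comNzRingType) (P : {mpoly R[n]} -> Prop) i k p :
  idealX P k.+1 p -> idealX P k p^`M(i).
Proof.
elim: k p => [//|k IHk]; have I1 := idealX_is_ideal P k.+1.
apply: (gen_ideal_ind (Phi := fun p => idealX P k.+1 p^`M(i)))
  => [|x y|c _ [a [b [Pa [Pb ->]]]]].
- by rewrite mderiv0; apply: ideal0.
- by rewrite mderivD; apply: idealD.
rewrite mulrA mderivM; apply: (idealD I1); first exact: (idealMl I1).
by rewrite -mulrA; apply: (idealMl I1); apply: idealXS_mul => //; apply: IHk.
Qed.

Lemma ord4_neqE :
  ((iX0 == iX1) = false) * ((iX0 == iY0) = false) * ((iX0 == iY1) = false) *
  ((iX1 == iX0) = false) * ((iX1 == iY0) = false) * ((iX1 == iY1) = false) *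
  ((iY0 == iX0) = false) * ((iY0 == iX1) = false) * ((iY0 == iY1) = false) *
  ((iY1 == iX0) = false) * ((iY1 == iX1) = false) * ((iY1 == iY0) = false).
Proof. by do !split; rewrite -val_eqE /= /iX0 /iX1 /iY0 /iY1 !inordK. Qed.

Lemma ord4_cases (i : 'I_4) : [\/ i = iX0, i = iX1, i = iY0 | i = iY1].
Proof.
by case: i => -[|[|[|[|//]]]] ?; [constructor 1|constructor 2|constructor 3|constructor 4];
  apply/val_inj; rewrite /= inordK.
Qed.

Lemma big_ord4 (T : Type) (idx : T) (op : Monoid.com_law idx) (F : 'I_4 -> T) :
  \big[op/idx]_(i < 4) F i = op (op (op (F iX0) (F iX1)) (F iY0)) (F iY1).
Proof.
rewrite !big_ord_recr big_ord0 /= Monoid.mul1m.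
by congr (op (op (op (F _) (F _)) (F _)) (F _)); apply: val_inj; rewrite /= inordK.
Qed.

Lemma ptcoordE (K : fieldType) (q r : K * K) :
  (ptcoord q r iX0 = q.1) * (ptcoord q r iX1 = q.2) *
  (ptcoord q r iY0 = r.1) * (ptcoord q r iY1 = r.2).
Proof. by rewrite /ptcoord !ord4_neqE !eqxx. Qed.

Lemma mpoly_rmorph_sub_ideal n (R : comNzRingType) (I : {mpoly R[n]} -> Prop)
    (f : {mpoly R[n]} -> {mpoly R[n]}) :
  is_ideal I -> {morph f : p q / p + q} -> {morph f : p q / p * q} ->
  (forall c, f c%:MP = c%:MP) -> (forall i, I ('X_i - f 'X_i)) ->
  forall p, I (p - f p).
Proof.
move=> hI fD fM fC fX; elim/mpoly_ringind => [c|//|p q Ip Iq|p q Ip Iq].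
- by rewrite fC subrr; apply: ideal0.
- by rewrite fD opprD addrACA; apply: idealD.
have -> : p * q - f (p * q) = (p - f p) * q + f p * (q - f q) by rewrite fM; ring.
by apply: (idealD hI); [apply: idealMr | apply: idealMl].
Qed.

Section PointIdeal.
Variables (K : fieldType) (q r : K * K).
Local Notation S := {mpoly K[4]}.
Local Notation P := (van_ideal q r).

Lemma bihomog_binom (a b : K) (i j : 'I_4) :
  (U_(i)%MM iX0 + U_(i)%MM iX1 = U_(j)%MM iX0 + U_(j)%MM iX1)%N ->
  (U_(i)%MM iY0 + U_(i)%MM iY1 = U_(j)%MM iY0 + U_(j)%MM iY1)%N ->
  bihomog (a%:MP * 'X_i - b%:MP * 'X_j : S).
Proof.
move=> eX eY; exists (U_(i)%MM iX0 + U_(i)%MM iX1)%N, (U_(i)%MM iY0 + U_(i)%MM iY1)%N.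
move=> mo.
rewrite mcoeff_msupp mcoeffB !mcoeffCM !mcoeffX.
have [<- //|_] := eqVneq U_(i)%MM mo; have [<- //|_] := eqVneq U_(j)%MM mo.
by rewrite !mulr0 subrr eqxx.
Qed.

Definition LQ : S := q.2%:MP * 'X_iX0 - q.1%:MP * 'X_iX1.
Definition LR : S := r.2%:MP * 'X_iY0 - r.1%:MP * 'X_iY1.

Lemma LQ_van : P LQ.
Proof.
apply: mem_gen_ideal; split; first by apply: bihomog_binom; rewrite !mnm1E !ord4_neqE ?eqxx.
by rewrite mevalB !mevalM !mevalC !mevalXU !ptcoordE mulrC subrr.
Qed.

Lemma LR_van : P LR.
Proof.
apply: mem_gen_ideal; split; first by apply: bihomog_binom; rewrite !mnm1E !ord4_neqE ?eqxx.
by rewrite mevalB !mevalM !mevalC !mevalXU !ptcoordE mulrC subrr.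
Qed.

Variables (u0 u1 v0 v1 : K).
Hypotheses (hu : u0 * q.2 - u1 * q.1 = 1) (hv : v0 * r.2 - v1 * r.1 = 1).

Definition dualQ : S := (- u1)%:MP * 'X_iX0 + u0%:MP * 'X_iX1.
Definition dualR : S := (- v1)%:MP * 'X_iY0 + v0%:MP * 'X_iY1.

(* As dualQ takes the value 1 at q and dualR the value 1 at r, this substitution
   is the identity modulo (LQ, LR). *)
Definition pt_subst : S -> S := mmap (@mpolyC 4 K)
  (fun i => (ptcoord q r i)%:MP * (if (i == iX0) || (i == iX1) then dualQ else dualR)).

Lemma pt_subst_homog F a b :
  (forall mo, mo \in msupp F -> (mo iX0 + mo iX1 = a)%N /\ (mo iY0 + mo iY1 = b)%N) ->
  pt_subst F = (F.@[ptcoord q r])%:MP * (dualQ ^+ a * dualR ^+ b).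
Proof.
move=> hF; rewrite mevalE rmorph_sum mulr_suml /pt_subst /mmap.
apply: eq_big_seq => mo /hF[<- <-]; rewrite rmorphM -mulrA; congr (_ * _).
rewrite /mmap1 (eq_bigr (fun i => (ptcoord q r i ^+ mo i)%:MP *
  (if (i == iX0) || (i == iX1) then dualQ else dualR) ^+ mo i)); last first.
  by move=> i _; rewrite exprMn rmorphXn.
rewrite big_split rmorph_prod; congr (_ * _).
by rewrite big_ord4 !ord4_neqE !eqxx /= !exprD !mulrA.
Qed.

Definition ideal_LQR (F : S) := exists g h, F = LQ * g + LR * h.

Lemma ideal_LQR_is_ideal : is_ideal ideal_LQR.
Proof.
split; first by exists 0, 0; rewrite !mulr0 addr0.
  by move=> _ _ [g [h ->]] [g' [h' ->]]; exists (g + g'), (h + h'); ring.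
by move=> c _ [g [h ->]]; exists (c * g), (c * h); ring.
Qed.

Lemma van_ideal_LQR F : P F -> ideal_LQR F.
Proof.
move: F; apply: (gen_ideal_min ideal_LQR_is_ideal) => F [[a [b hF]] F0].
rewrite -[F]subr0 -(mul0r (dualQ ^+ a * dualR ^+ b)) -mpolyC0 -F0 -(pt_subst_homog hF).
apply: (mpoly_rmorph_sub_ideal ideal_LQR_is_ideal) => [||c|i].
- exact: rmorphD.
- exact: rmorphM.
- exact: mmapC.
rewrite /pt_subst mmapX mmap1U; case: (ord4_cases i) => ->;
  rewrite !ord4_neqE ?eqxx !ptcoordE /= /dualQ /dualR.
- exists u0%:MP, 0; rewrite -[X in X - _]mul1r -mpolyC1 -hu /LQ rmorphB !rmorphM rmorphN; ring.
- exists u1%:MP, 0; rewrite -[X in X - _]mul1r -mpolyC1 -hu /LQ rmorphB !rmorphM rmorphN; ring.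
- exists 0, v0%:MP; rewrite -[X in X - _]mul1r -mpolyC1 -hv /LR rmorphB !rmorphM rmorphN; ring.
- exists 0, v1%:MP; rewrite -[X in X - _]mul1r -mpolyC1 -hv /LR rmorphB !rmorphM rmorphN; ring.
Qed.

Definition derQ (F : S) : S := u0%:MP * F^`M(iX0) + u1%:MP * F^`M(iX1).
Definition derR (F : S) : S := v0%:MP * F^`M(iY0) + v1%:MP * F^`M(iY1).
Definition euler (F : S) : S := LQ * derQ F + LR * derR F.

Lemma eulerD F G : euler (F + G) = euler F + euler G.
Proof. by rewrite /euler /derQ /derR !mderivD; ring. Qed.

Lemma eulerM F G : euler (F * G) = euler F * G + F * euler G.
Proof. by rewrite /euler /derQ /derR !mderivM; ring. Qed.

Lemma euler_LQ : euler LQ = LQ.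
Proof.
rewrite -[RHS]mulr1 -mpolyC1 -hu /euler /derQ /derR /LQ.
by rewrite !mderivB !mderiv_mulC !mderivXU !ord4_neqE !eqxx rmorphB !rmorphM /=; ring.
Qed.

Lemma euler_LR : euler LR = LR.
Proof.
rewrite -[RHS]mulr1 -mpolyC1 -hv /euler /derQ /derR /LR.
by rewrite !mderivB !mderiv_mulC !mderivXU !ord4_neqE !eqxx rmorphB !rmorphM /=; ring.
Qed.

Lemma euler_van F : P (euler F).
Proof.
have hP : is_ideal P := gen_ideal_is_ideal _.
by apply: (idealD hP); apply: (idealMr hP); [apply: LQ_van | apply: LR_van].
Qed.

Lemma euler_sub_van a :
  P a -> exists g h, [/\ P g, P h & euler a - a = LQ * g + LR * h].
Proof.
case/van_ideal_LQR=> g [h ->]; exists (euler g), (euler h); split; try exact: euler_van.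
by rewrite eulerD !eulerM euler_LQ euler_LR; ring.
Qed.

Lemma euler_idealXS k F : (forall i, idealX P k F^`M(i)) -> idealX P k.+1 (euler F).
Proof.
move=> dF; have Ik := idealX_is_ideal P k.
apply: (idealD (idealX_is_ideal P k.+1)).
  by apply: (idealXS_mul LQ_van); apply: (idealD Ik); apply: (idealMl Ik).
by apply: (idealXS_mul LR_van); apply: (idealD Ik); apply: (idealMl Ik).
Qed.

Lemma euler_idealX_sub k G : idealX P k G -> idealX P k.+1 (euler G - k%:R * G).
Proof.
elim: k G => [|k IHk] G.
  by rewrite mul0r subr0 -[euler G]mulr1 => _; apply: idealXS_mul; first exact: euler_van.
have I2 := idealX_is_ideal P k.+2.
apply: (gen_ideal_ind (Phi := fun G => idealX P k.+2 (euler G - k.+1%:R * G))).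
- by rewrite /euler /derQ /derR !mderiv0 !(mulr0, addr0) subrr; apply: ideal0.
- move=> x y Ix Iy; rewrite eulerD mulrDr opprD addrACA; exact: (idealD I2).
move=> c _ [a [b [Pa [Pb ->]]]]; have [g [h [Pg Ph ea]]] := euler_sub_van Pa.
have -> : euler (c * (a * b)) - k.+1%:R * (c * (a * b)) = euler c * (a * b) +
    c * ((LQ * (g * b) + LR * (h * b)) + a * (euler b - k%:R * b)).
  by rewrite !eulerM -[euler a](subrK a) ea; ring.
apply: (idealD I2); first by apply: idealXS_mul; [apply: euler_van | apply: idealXS_mul].
apply: (idealMl I2); apply: (idealD I2); last by apply: idealXS_mul => //; apply: IHk.
by apply: (idealD I2); [apply: (idealXS_mul LQ_van) | apply: (idealXS_mul LR_van)];
  apply: idealXS_mul.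
Qed.

Lemma idealXS_mderiv k F : (k%:R : K) != 0 -> idealX P k F ->
  (forall i, idealX P k F^`M(i)) -> idealX P k.+1 F.
Proof.
move=> k_neq0 IF dF; have I1 := idealX_is_ideal P k.+1.
have IkF : idealX P k.+1 (k%:R * F).
  rewrite -[_ * F](subKr (euler F)).
  by apply: (idealB I1); [apply: euler_idealXS | apply: euler_idealX_sub].
rewrite -[F]mul1r -mpolyC1 -(mulVf k_neq0) rmorphM /= -mulrA mpolyC_nat.
exact: (idealMl I1).
Qed.

End PointIdeal.

HB.instance Definition _ (K : fieldType) :=
  GRing.RMorphism.copy (@embL K) (mmap (@mpolyC (4 + 4) K) (fun i => 'X_(lshift 4 i))).
HB.instance Definition _ (K : fieldType) :=
  GRing.RMorphism.copy (@embR K) (mmap (@mpolyC (4 + 4) K) (fun i => 'X_(rshift 4 i))).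
HB.instance Definition _ (K : fieldType) :=
  GRing.RMorphism.copy (@diagmap K) (mmap (@mpolyC 4 K)
    (fun k : 'I_(4 + 4) => 'X_(match split k with inl i => i | inr i => i end))).

Section FirstOrderTaylor.
Variable K : fieldType.
Local Notation S := {mpoly K[4]}.
Local Notation S2 := {mpoly K[4 + 4]}.

Definition dcoef (i : 'I_4) (w : S2) : S := diagmap w^`M(rshift 4 i).
Definition diag_ker2 (x : S2) :=
  exists a b, [/\ diagmap a = 0, diagmap b = 0 & x = a * b].

Lemma embLX i : embL ('X_i : S) = 'X_(lshift 4 i).
Proof. by rewrite /embL mmapX mmap1U. Qed.

Lemma embRX i : embR ('X_i : S) = 'X_(rshift 4 i).
Proof. by rewrite /embR mmapX mmap1U. Qed.

Lemma diagmap_Xl i : diagmap ('X_(lshift 4 i) : S2) = 'X_i.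
Proof. by rewrite /diagmap mmapX mmap1U (unsplitK (inl _ i)). Qed.

Lemma diagmap_Xr i : diagmap ('X_(rshift 4 i) : S2) = 'X_i.
Proof. by rewrite /diagmap mmapX mmap1U (unsplitK (inr _ i)). Qed.

Lemma lshift_rshift_eqF (i j : 'I_4) : (lshift 4 j == rshift 4 i) = false.
Proof. by apply/negbTE; rewrite -val_eqE /= neq_ltn (leq_trans (ltn_ord j)) ?leq_addr. Qed.

Lemma rshift_eqE (i j : 'I_4) : (rshift 4 j == rshift 4 i) = (j == i).
Proof. by rewrite -val_eqE /= eqn_add2l. Qed.

Lemma diagmap_embL (F : S) : diagmap (embL F) = F.
Proof.
elim/mpoly_ringind: F => [c|i|F G eF eG|F G eF eG].
- by rewrite /diagmap /embL !mmapC.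
- by rewrite embLX diagmap_Xl.
- by rewrite !rmorphD /= eF eG.
- by rewrite !rmorphM /= eF eG.
Qed.

Lemma diagmap_embR (F : S) : diagmap (embR F) = F.
Proof.
elim/mpoly_ringind: F => [c|i|F G eF eG|F G eF eG].
- by rewrite /diagmap /embR !mmapC.
- by rewrite embRX diagmap_Xr.
- by rewrite !rmorphD /= eF eG.
- by rewrite !rmorphM /= eF eG.
Qed.

Lemma diagmap_sub_embL (w : S2) : diagmap (w - embL (diagmap w)) = 0.
Proof. by rewrite rmorphB /= diagmap_embL subrr. Qed.

Lemma dcoefD i : {morph dcoef i : w v / w + v}.
Proof. by move=> w v; rewrite /dcoef mderivD rmorphD. Qed.

Lemma dcoefM i w v : dcoef i (w * v) = dcoef i w * diagmap v + dcoef i v * diagmap w.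
Proof. by rewrite /dcoef mderivM rmorphD !rmorphM [diagmap w * _]mulrC. Qed.

Lemma dcoef_embL i (F : S) : dcoef i (embL F) = 0.
Proof.
rewrite /dcoef; suff -> : (embL F)^`M(rshift 4 i) = 0 by rewrite rmorph0.
elim/mpoly_ringind: F => [c|j|F G eF eG|F G eF eG].
- by rewrite /embL mmapC mderivC.
- by rewrite embLX mderivXU lshift_rshift_eqF.
- by rewrite rmorphD mderivD eF eG addr0.
- by rewrite rmorphM mderivM eF eG mulr0 mul0r addr0.
Qed.

Lemma dcoef_embR i (F : S) : dcoef i (embR F) = F^`M(i).
Proof.
elim/mpoly_ringind: F => [c|j|F G eF eG|F G eF eG].
- by rewrite /dcoef /embR mmapC !mderivC rmorph0.
- by rewrite /dcoef embRX !mderivXU rshift_eqE rmorph_nat.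
- by rewrite rmorphD dcoefD eF eG mderivD.
- by rewrite rmorphM dcoefM eF eG !diagmap_embR mderivM [G^`M(i) * F]mulrC.
Qed.

Lemma dcoef_dX i j : dcoef i ('X_(rshift 4 j) - 'X_(lshift 4 j)) = (j == i)%:R.
Proof. by rewrite /dcoef mderivB !mderivXU rshift_eqE lshift_rshift_eqF subr0 rmorph_nat. Qed.

Lemma eq_dmap (G H : 'I_4 -> S) : G =1 H -> dmap G = dmap H.
Proof. by move=> GH; apply: eq_bigr => i _; rewrite GH. Qed.

Lemma dmapD (G H : 'I_4 -> S) : dmap (fun i => G i + H i) = dmap G + dmap H.
Proof. by rewrite /dmap -big_split; apply: eq_bigr => i _; rewrite rmorphD mulrDl. Qed.

Lemma dmapMr (G : 'I_4 -> S) a : dmap (fun i => G i * a) = dmap G * embL a.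
Proof.
rewrite /dmap; symmetry; rewrite big_distrl; apply: eq_bigr => i _.
by rewrite (rmorphM (@embL K)) mulrAC.
Qed.

Lemma dcoef_dmap i (G : 'I_4 -> S) : dcoef i (dmap G) = G i.
Proof.
have dcoef0 : dcoef i 0 = 0 by rewrite /dcoef mderiv0 rmorph0.
rewrite /dmap (big_morph _ (dcoefD i) dcoef0) (bigD1 i) //= big1 => [|j /negbTE ji].
  by rewrite dcoefM dcoef_dX dcoef_embL eqxx mul0r add0r diagmap_embL mul1r addr0.
by rewrite dcoefM dcoef_dX dcoef_embL ji !mul0r addr0.
Qed.

Definition taylor_rem (w : S2) : S2 :=
  w - embL (diagmap w) - dmap (fun i => dcoef i w).

(* Generalizing the images under embL, diagmap and dmap before calling ring
   keeps it from unfolding them. *)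
Lemma taylor_remD w v : taylor_rem (w + v) = taylor_rem w + taylor_rem v.
Proof.
rewrite /taylor_rem (rmorphD (@diagmap K)) (rmorphD (@embL K)) /=.
rewrite (eq_dmap (fun i => dcoefD i w v)) dmapD.
move: (embL (diagmap w)) (embL (diagmap v)) (dmap _) (dmap _) => a b la lb; ring.
Qed.

Lemma taylor_remM w v : taylor_rem (w * v) =
  taylor_rem w * embL (diagmap v) + taylor_rem v * embL (diagmap w) +
  (w - embL (diagmap w)) * (v - embL (diagmap v)).
Proof.
rewrite /taylor_rem (rmorphM (@diagmap K)) (rmorphM (@embL K)) /=.
rewrite (eq_dmap (fun i => dcoefM i w v)) dmapD !dmapMr.
move: (embL (diagmap w)) (embL (diagmap v)) (dmap _) (dmap _) => a b la lb; ring.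
Qed.

Lemma taylor_rem_ker2 w : gen_ideal diag_ker2 (taylor_rem w).
Proof.
have hI := gen_ideal_is_ideal diag_ker2.
elim/mpoly_ringind: w => [c|k|w v Iw Iv|w v Iw Iv].
- rewrite /taylor_rem /dmap big1 => [|i _]; last by rewrite /dcoef mderivC !rmorph0 mul0r.
  by rewrite /diagmap mmapC /embL mmapC !subrr; apply: ideal0.
- rewrite /taylor_rem -(splitK k); case: (split k) => j /=.
    rewrite /dmap big1 => [|i _]; last first.
      by rewrite /dcoef mderivXU lshift_rshift_eqF !rmorph0 mul0r.
    by rewrite diagmap_Xl embLX !subrr; apply: ideal0.
  rewrite /dmap (bigD1 j) //= big1 => [|i /negbTE ji]; last first.
    by rewrite /dcoef mderivXU rshift_eqE eq_sym ji !rmorph0 mul0r.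
  rewrite /dcoef mderivXU rshift_eqE eqxx !rmorph1 mul1r addr0 diagmap_Xr embLX.
  by rewrite subrr; apply: ideal0.
- by rewrite taylor_remD; apply: (idealD hI).
rewrite taylor_remM; apply: (idealD hI).
  by apply: (idealD hI); apply: (idealMr hI).
apply: mem_gen_ideal; exists (w - embL (diagmap w)), (v - embL (diagmap v)).
by split=> //; apply: diagmap_sub_embL.
Qed.

End FirstOrderTaylor.

Section KaehlerDifferentials.
Variables (K : fieldType) (I : {mpoly K[4]} -> Prop).
Hypothesis hI : is_ideal I.
Local Notation S := {mpoly K[4]}.

Lemma omega_zero_is_ideal : is_ideal (omega_zero I).
Proof. exact: gen_ideal_is_ideal. Qed.

Lemma omega_zero_embL F : I F -> omega_zero I (embL F).
Proof. by move=> IF; apply: mem_gen_ideal; right; left; exists F. Qed.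

Lemma omega_zero_embR F : I F -> omega_zero I (embR F).
Proof. by move=> IF; apply: mem_gen_ideal; right; right; exists F. Qed.

Lemma omega_zero_diag_ker2 w : gen_ideal (@diag_ker2 K) w -> omega_zero I w.
Proof.
apply: gen_ideal_mono => _ [a [b [da db ->]]]; left; exists a, b.
by rewrite /Jpre da db; split; [apply: (ideal0 hI) | split; [apply: (ideal0 hI) |]].
Qed.

Lemma dmap_omega_zero (G : 'I_4 -> S) : (forall i, I (G i)) -> omega_zero I (dmap G).
Proof.
move=> IG; apply: (ideal_sum omega_zero_is_ideal) => i.
by apply: (idealMr omega_zero_is_ideal); apply: omega_zero_embL.
Qed.

Lemma dmap_dF_omega_zero F : I F -> omega_zero I (dmap (dF F)).
Proof.
move=> IF; have hO := omega_zero_is_ideal.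
have -> : dmap (dF F) = embR F - embL F - taylor_rem (embR F).
  rewrite /taylor_rem diagmap_embR (eq_dmap (fun i => dcoef_embR i F)).
  by move: (embR F) (embL F) (dmap _) => a b c; ring.
apply: (idealB hO); last exact/omega_zero_diag_ker2/taylor_rem_ker2.
by apply: (idealB hO); [apply: omega_zero_embR | apply: omega_zero_embL].
Qed.

Lemma omega_zero_sub_dmap_dcoef w :
  Jpre I w -> omega_zero I (w - dmap (fun i => dcoef i w)).
Proof.
move=> Iw; rewrite -[w in w - _](subrK (embL (diagmap w))) addrAC.
apply: (idealD omega_zero_is_ideal); first exact/omega_zero_diag_ker2/taylor_rem_ker2.
exact: omega_zero_embL.
Qed.

Lemma omega_zero_dcoef w : omega_zero I w ->
  exists2 F, I F & forall i, I (dcoef i w - F^`M(i)).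
Proof.
apply: (gen_ideal_ind
  (Phi := fun w => exists2 F, I F & forall i, I (dcoef i w - F^`M(i)))).
- exists 0 => [|i]; first exact: (ideal0 hI).
  by rewrite /dcoef !mderiv0 rmorph0 subrr; apply: (ideal0 hI).
- move=> x y [F IF dF] [G IG dG]; exists (F + G) => [|i]; first exact: (idealD hI).
  by rewrite dcoefD mderivD opprD addrACA; apply: (idealD hI).
move=> c _ [[a [b [Ia [Ib ->]]]] | [[f [If ->]] | [f [If ->]]]].
- exists 0 => [|i]; first exact: (ideal0 hI).
  rewrite mderiv0 subr0 !dcoefM (rmorphM (@diagmap K)) /=.
  apply: (idealD hI); first by apply: (idealMl hI); apply: (idealMr hI).
  by apply: (idealMr hI); apply: (idealD hI); apply: (idealMl hI).
- exists 0 => [|i]; first exact: (ideal0 hI).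
  rewrite mderiv0 subr0 dcoefM dcoef_embL mul0r addr0 diagmap_embL.
  exact: (idealMl hI).
exists (diagmap c * f) => [|i]; first exact: (idealMl hI).
rewrite dcoefM dcoef_embR diagmap_embR mderivM.
have -> : forall x y z t : S, x * f + y * z - (t * f + z * y) = (x - t) * f.
  by move=> x y z t; ring.
exact: (idealMl hI).
Qed.

End KaehlerDifferentials.

Lemma unimodular_pair (K : fieldType) (q : K * K) : q != (0, 0) ->
  exists u0 u1, u0 * q.2 - u1 * q.1 = 1.
Proof.
case: q => a b /=; have [-> b_neq0|a_neq0 _] := eqVneq a 0.
  by exists b^-1, 0; rewrite mul0r subr0 mulVf //; apply: contraNneq b_neq0 => ->.
by exists 0, (- a^-1); rewrite mul0r sub0r mulNr opprK mulVf.
Qed.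

Lemma fat_ideal_is_ideal (K : fieldType) r t
    (Q : 'I_r -> K * K) (R : 'I_t -> K * K) D mu :
  is_ideal (fat_ideal Q R D mu).
Proof.
split=> [ij _|F G IF IG ij ijD|c F IF ij ijD];
  have hI := idealX_is_ideal (van_ideal (Q ij.1) (R ij.2)) (mu ij.1 ij.2).
- exact: (ideal0 hI).
- by apply: (idealD hI); [apply: IF | apply: IG].
- by apply: (idealMl hI); apply: IF.
Qed.

Theorem theorem3p5 (K : fieldType) (charK0 : [pchar K] =i pred0)
  (r t : nat) (Q : 'I_r -> K * K) (R : 'I_t -> K * K)
  (hQ0 : forall i, Q i != (0, 0))
  (hQd : forall i i', i != i' -> (Q i).1 * (Q i').2 != (Q i).2 * (Q i').1)
  (hR0 : forall j, R j != (0, 0))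
  (hRd : forall j j', j != j' -> (R j).1 * (R j').2 != (R j).2 * (R j').1)
  (D : {set 'I_r * 'I_t})
  (hD1 : forall i, exists j, (i, j) \in D)
  (hD2 : forall j, exists i, (i, j) \in D)
  (m : 'I_r -> 'I_t -> nat) (hm : forall i j, (i, j) \in D -> (0 < m i j)%N) :
  let IY := fat_ideal Q R D m in
  let IV := fat_ideal Q R D (fun i j => (m i j).+1) in
  (* I_V is contained in I_Y, so I_Y/I_V makes sense *)
      (forall F, IV F -> IY F) /\
      (* the first map is well defined *)
      (forall F, IV F -> forall i, IY (dF F i)) /\
      (* the second map is well defined *)
      (forall G : 'I_4 -> {mpoly K[4]}, (forall i, IY (G i)) ->
          omega_zero IY (dmap G)) /\
      (* exactness at I_Y/I_V (injectivity) *)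
      (forall F, IY F -> (forall i, IY (dF F i)) -> IV F) /\
      (* the composite is zero *)
      (forall F, IY F -> omega_zero IY (dmap (dF F))) /\
      (* exactness in the middle *)
      (forall G : 'I_4 -> {mpoly K[4]}, omega_zero IY (dmap G) ->
          exists2 F, IY F & forall i, IY (G i - dF F i)) /\
      (* exactness at Omega^1 (surjectivity) *)
      (forall w, Jpre IY w -> exists G : 'I_4 -> {mpoly K[4]},
          omega_zero IY (w - dmap G)).
Proof.
move=> IY IV; have hIY : is_ideal IY := fat_ideal_is_ideal Q R D m.
split=> [F IVF ij ijD|]; first exact: idealXS_sub (IVF ij ijD).
split=> [F IVF i ij ijD|]; first exact: mderiv_idealX (IVF ij ijD).
split; first exact: dmap_omega_zero.
split=> [F IYF dIYF [i j] ijD|].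
  have [u0 [u1 hu]] := unimodular_pair (hQ0 i).
  have [v0 [v1 hv]] := unimodular_pair (hR0 j).
  apply: (idealXS_mderiv hu hv); [|exact: IYF|by move=> k; apply: dIYF].
  by move/pcharf0P: charK0 => ->; rewrite -lt0n hm.
split; first exact: dmap_dF_omega_zero.
split=> [G /(omega_zero_dcoef hIY)[F IYF dG]|w Jw].
  by exists F => // i; rewrite -(dcoef_dmap i G); apply: dG.
by exists (fun i => dcoef i w); apply: omega_zero_sub_dmap_dcoef.
Qed.
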